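(* Let $\mathcal{A}$ be a finite set of players and $\mathcal{R}$ a finite set of resources. Each player $i\in\mathcal{A}$ has a finite set $\Gamma_i$ of strategies (trajectories), and each $\gamma_i\in\Gamma_i$ determines a set $\gamma_i^{\mathrm{cg}}\subseteq\mathcal{R}$ of used resources. For a joint strategy $\gamma=(\gamma_i)_{i\in\mathcal{A}}\in\Gamma=\prod_i\Gamma_i$, the load of $r\in\mathcal{R}$ is $l_r(\gamma)=\sum_{i\in\mathcal{A}}\mathbf{1}[r\in\gamma_i^{\mathrm{cg}}]$. Each resource $r$ has a cost function $J_r:\mathbb{N}\to\mathbb{R}$ which is a polynomial with non-negative coefficients and degree at most $d\in\mathbb{N}$. Player $i$'s cost is $J_i(\gamma)=J_i^{\mathrm{cg}}(\gamma)+J_i^{\mathrm{per}}(\gamma_i)$, where $J_i^{\mathrm{cg}}(\gamma)=\sum_{r\in\gamma_i^{\mathrm{cg}}}J_r(l_r(\gamma))$ and $J_i^{\mathrm{per}}:\Gamma_i\to\mathbb{R}_{\ge 0}$ is a personal cost depending only on $\gamma_i$. Let $C(\gamma)=\sum_{i}J_i(\gamma)$, let $\Gamma_{\mathrm{NE}}$ be the set of pure Nash equilibria, $\Gamma^\star=\arg\min_{\gamma\in\Gamma}C(\gamma)$, and $\mathrm{PoA}=\max_{\gamma\in\Gamma_{\mathrm{NE}}}C(\gamma)/\min_{\gamma\in\Gamma}C(\gamma)$. Let $\alpha^\star\in\mathbb{R}_{\ge0}$ be the largest constant such that $J_i^{\mathrm{per}}(\gamma_i)\ge\alpha^\star J_i^{\mathrm{cg}}(\gamma)$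 for all $i\in\mathcal{A}$ and all $\gamma\in\Gamma_{\mathrm{NE}}\cup\Gamma^\star$. Let $\Psi_{d,\alpha^\star}$ be the positive real solution of $x^{d+1}+\alpha^\star x^{d+1}=(x+1)^d+\alpha^\star$ and $k=\lfloor\Psi_{d,\alpha^\star}\rfloor$. Then $$\mathrm{PoA}\le\frac{(k+1)^{2d+1}-k^{d+1}(k+2)^d+\alpha^\star\left((k+1)^{d+1}-k^{d+1}\right)}{(1+\alpha^\star)\left((k+1)^{d+1}-k^{d+1}\right)-(k+2)^d+(k+1)^d}.$$
   Context: This models urban driving games as congestion games: resources are cells of a discretization of the road in space, time and ''proximity levels'', and a trajectory uses the resources corresponding to its (inflated) spatio-temporal occupancy. Costs are assumed positive (non-negative). A pure Nash equilibrium is a $\gamma$ with $J_i(\gamma)\le J_i(\gamma_i',\gamma_{-i})$ for all $i$ and all $\gamma_i'\in\Gamma_i$. *)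

From mathcomp Require Import all_boot all_order all_algebra.
Set Implicit Arguments. Unset Strict Implicit. Unset Printing Implicit Defensive.
Import Order.TTheory GRing.Theory Num.Theory.
Local Open Scope ring_scope.

Section CongestionGame.
Variables (R : realFieldType) (A Res : finType) (T : A -> finType).
Variable used : forall i : A, T i -> {set Res}.
Variable Jr : Res -> {poly R}.
Variable Jper : forall i : A, T i -> R.

Definition profile := forall i : A, T i.

Definition load (r : Res) (g : profile) : nat :=
  (\sum_(i : A) (r \in used (g i)))%N.

Definition Jcg (i : A) (g : profile) : R :=
  \sum_(r in used (g i)) (Jr r).[(load r g)%:R].

Definition Jcost (i : A) (g : profile) : R := Jcg i g + Jper (g i).

Definition Csoc (g : profile) : R := \sum_(i : A) Jcost i g.

Definition isNE (g : profile) : Prop :=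
  forall (i : A) (x : T i), Jcost i g <= Jcost i (dfwith g x).

Definition isOpt (g : profile) : Prop := forall g' : profile, Csoc g <= Csoc g'.

Definition alpha_ok (alpha : R) : Prop :=
  forall (i : A) (g : profile), (isNE g \/ isOpt g) -> alpha * Jcg i g <= Jper (g i).

End CongestionGame.

Definition poa_bound (R : realFieldType) (d k : nat) (alpha : R) : R :=
  ((k.+1%:R) ^+ (2 * d + 1) - (k%:R) ^+ d.+1 * (k.+2%:R) ^+ d
     + alpha * ((k.+1%:R) ^+ d.+1 - (k%:R) ^+ d.+1))
  / ((1 + alpha) * ((k.+1%:R) ^+ d.+1 - (k%:R) ^+ d.+1)
     - (k.+2%:R) ^+ d + (k.+1%:R) ^+ d).

(* Write P = (k+2)^d - (k+1)^d, Q = (k+1)^(d+1) - k^(d+1) and L = (k+1)^d Q - k^(d+1) P.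
   The ratio P_m / Q_m of consecutive power differences is nonincreasing in m, so
   n |-> P n^(d+1) - Q (n+1)^d is minimal at n = k, where it equals -L.  Rescaling and
   lowering the degree gives Q y (x+1)^j <= L y^(j+1) + P x^(j+1) for all naturals x, y and
   j <= d, i.e. every resource cost is (L/Q, P/Q)-smooth.  Comparing a Nash equilibrium with
   the unilateral deviations towards any profile o then bounds its social cost by
   (L/Q) J^cg(o) + (P/Q) J^cg(g) + J^per(o), and J^per >= alpha J^cg turns this into the
   stated ratio.  The choice k = floor Psi only serves to make the denominator (1+alpha) Q - P
   positive: it is G(k+1) - G(k) for G(x) = (1+alpha) x^(d+1) - alpha - (x+1)^d, which is
   nonpositive up to Psi and positive after. *)

From mathcomp Require Import all_boot all_order all_algebra.
From mathcomp Require Import ring lra.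
Import Order.TTheory GRing.Theory Num.Theory.
Set Implicit Arguments. Unset Strict Implicit. Unset Printing Implicit Defensive.
Local Open Scope ring_scope.

Section PowerDifferences.
Variable R : realFieldType.
Implicit Types (t x y z : R) (n : nat).

Definition fdiffX n t : R := (t + 1) ^+ n - t ^+ n.

Lemma fdiffX_ge0 n t : 0 <= t -> 0 <= fdiffX n t.
Proof. by move=> t0; rewrite subr_ge0 lerXn2r ?nnegrE ?lerDl //; lra. Qed.

Lemma fdiffX_gt0 n t : 0 <= t -> 0 < fdiffX n.+1 t.
Proof. by move=> t0; rewrite subr_gt0 ltrXn2r ?nnegrE ?ltrDl //; lra. Qed.

Lemma fdiffX_sumE n t : fdiffX n.+1 t = \sum_(i < n.+1) (t + 1) ^+ (n - i) * t ^+ i.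
Proof. by rewrite /fdiffX subrXX addrAC subrr add0r mul1r. Qed.

Lemma fdiffX_sumE_rev n t : fdiffX n.+1 t = \sum_(i < n.+1) t ^+ (n - i) * (t + 1) ^+ i.
Proof. by rewrite /fdiffX -[LHS]opprK opprB subrXX -opprB addrAC subrr add0r mulN1r opprK. Qed.

Lemma geom_sum_log_concave x y z n : 0 <= x -> 0 <= y -> 0 <= z -> x * z <= y * y ->
  z ^+ n * \sum_(i < n.+1) x ^+ (n - i) * y ^+ i
    <= y ^+ n * \sum_(i < n.+1) y ^+ (n - i) * z ^+ i.
Proof.
move=> x0 y0 z0 xzy; rewrite !mulr_sumr; apply: ler_sum => -[i /= lt_in] _.
have splitX (w : R) : w ^+ n = w ^+ (n - i) * w ^+ i by rewrite -exprD subnK.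
rewrite (splitX z) (splitX y).
have -> : (z ^+ (n - i) * z ^+ i) * (x ^+ (n - i) * y ^+ i)
        = (x * z) ^+ (n - i) * (y * z) ^+ i by rewrite !exprMn; ring.
have -> : (y ^+ (n - i) * y ^+ i) * (y ^+ (n - i) * z ^+ i)
        = (y * y) ^+ (n - i) * (y * z) ^+ i by rewrite !exprMn; ring.
by rewrite ler_wpM2r ?exprn_ge0 ?mulr_ge0 // lerXn2r ?nnegrE ?mulr_ge0.
Qed.

Lemma fdiffX_shift_le n t : 0 <= t ->
  t ^+ n * fdiffX n.+1 (t + 1) <= (t + 1) ^+ n * fdiffX n.+1 t.
Proof.
move=> t0; rewrite !fdiffX_sumE; apply: geom_sum_log_concave; nra.
Qed.

Lemma fdiffX_shift_ge n t : 0 <= t ->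
  (t + 2) ^+ n * fdiffX n.+1 t <= (t + 1) ^+ n * fdiffX n.+1 (t + 1).
Proof.
move=> t0; rewrite !fdiffX_sumE_rev -addrA.
apply: geom_sum_log_concave; nra.
Qed.

End PowerDifferences.

Lemma valley_le (R : realFieldType) (f : nat -> R) k :
  (forall n, (n < k)%N -> f n.+1 <= f n) -> (forall n, (k <= n)%N -> f n <= f n.+1) ->
  forall n, f k <= f n.
Proof.
move=> f_dec f_inc n; case: (leqP k n) => [le_kn | /ltnW le_nk].
- have f_mono : {in [pred m | k <= m]%N &, {homo f : i j / (i <= j)%N >-> i <= j}}.
    apply: homo_leq_in => //.
    + exact: le_trans.
    + by move=> i j /= le_ki _ m /andP[/ltnW le_im _]; apply: leq_trans le_im.
    + by move=> i /= le_ki _; apply: f_inc.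
  by apply: (f_mono k n); rewrite ?inE.
- have f_anti : {in [pred m | m <= k]%N &, {homo f : i j / (i <= j)%N >-> j <= i}}.
    apply: homo_leq_in => //.
    + by move=> ? ? ? le1 le2; apply: le_trans le2 le1.
    + by move=> i j _ /= le_jk m /andP[_ /ltnW le_mj]; apply: leq_trans le_jk.
    + by move=> i _; apply: f_dec.
  by apply: (f_anti n k); rewrite ?inE.
Qed.

Section Smoothness.
Variables (R : realFieldType) (d : nat).

Local Notation P m := (fdiffX d (m.+1%:R : R)).
Local Notation Q m := (fdiffX d.+1 (m%:R : R)).

Lemma fdiffX_cross_step m : P m.+1 * Q m <= P m * Q m.+1.
Proof.
case: d => [|n]; first by rewrite /fdiffX !expr0 !subrr !mul0r.
have le_P := fdiffX_shift_le n (ler0n R m.+1).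
have le_Q := fdiffX_shift_ge n.+1 (ler0n R m).
have two : m%:R + 2 = m.+2%:R :> R by rewrite -natrD addn2.
rewrite !natr1 in le_P; rewrite two natr1 !exprS in le_Q.
set a := fdiffX _ m.+2%:R in le_P *; set b := fdiffX _ m.+1%:R in le_P *.
set c := fdiffX _ m%:R in le_Q *; set e := fdiffX _ m.+1%:R in le_Q *.
set s := m.+1%:R ^+ n in le_P le_Q; set u := m.+2%:R ^+ n in le_P le_Q.
have s_gt0 : 0 < s by rewrite exprn_gt0.
have u_gt0 : 0 < u by rewrite exprn_gt0.
have [a0 b0 c0 e0] : [/\ 0 <= a, 0 <= b, 0 <= c & 0 <= e] by split; apply: fdiffX_ge0.
(* Multiplying the two shift bounds leaves the factor (m+1)/(m+2) <= 1. *)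
have key : s * u * m.+2%:R * (a * c) <= s * u * m.+1%:R * (b * e).
  have -> : s * u * m.+2%:R * (a * c) = s * a * (m.+2%:R * u * c) by ring.
  have -> : s * u * m.+1%:R * (b * e) = u * b * (m.+1%:R * s * e) by ring.
  by apply: ler_pM; rewrite // !mulr_ge0 ?(ltW s_gt0) ?(ltW u_gt0).
rewrite -(ler_pM2l (_ : 0 < s * u * m.+2%:R)) ?mulr_gt0 //.
apply: le_trans key _; rewrite ler_wpM2r ?mulr_ge0 //.
by rewrite ler_wpM2l ?mulr_ge0 ?(ltW s_gt0) ?(ltW u_gt0) // ler_nat.
Qed.

Lemma fdiffX_cross_le m n : (m <= n)%N -> P n * Q m <= P m * Q n.
Proof.
have ratio_noninc : {homo (fun i => P i / Q i) : i j / (i <= j)%N >-> j <= i}.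
  apply: homo_leq => [//|x y z le1 le2|i]; first exact: le_trans le2 le1.
  by rewrite ler_pdivrMr ?fdiffX_gt0 // mulrAC ler_pdivlMr ?fdiffX_gt0 // fdiffX_cross_step.
move=> /ratio_noninc /=.
by rewrite ler_pdivrMr ?fdiffX_gt0 // mulrAC ler_pdivlMr ?fdiffX_gt0.
Qed.

Variable k : nat.

Definition smooth_num : R := Q k * k.+1%:R ^+ d - P k * k%:R ^+ d.+1.
Local Notation L := smooth_num.

Lemma smooth_unit_deg n : Q k * n.+1%:R ^+ d <= L + P k * n%:R ^+ d.+1.
Proof.
pose phi i := P k * i%:R ^+ d.+1 - Q k * i.+1%:R ^+ d.
have phi_step i : phi i.+1 - phi i = P k * Q i - Q k * P i.
  by rewrite /phi /fdiffX !natr1; ring.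
have phi_min : phi k <= phi n.
  apply: (valley_le (f := phi)) => i lt_ik.
  - by rewrite -subr_le0 phi_step subr_le0 [leRHS]mulrC fdiffX_cross_le // ltnW.
  - by rewrite -subr_ge0 phi_step subr_ge0 [leLHS]mulrC fdiffX_cross_le.
by move: phi_min; rewrite /phi /smooth_num; lra.
Qed.

Lemma smooth_num_ge : Q k <= L.
Proof. by have := smooth_unit_deg 0; rewrite expr1n mulr1 expr0n mulr0 addr0. Qed.

Lemma smooth_unit j n : (j <= d)%N -> Q k * n.+1%:R ^+ j <= L + P k * n%:R ^+ j.+1.
Proof.
move=> le_jd; set c : R := n.+1%:R ^+ (d - j).
have c_ge1 : 1 <= c by rewrite exprn_ege1 // ler1n.
have L_ge0 : 0 <= L by apply: le_trans (fdiffX_ge0 _ (ler0n R k)) smooth_num_ge.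
have powd : n.+1%:R ^+ d = n.+1%:R ^+ j * c :> R by rewrite -exprD subnKC.
have powd1 : n%:R ^+ d.+1 <= n%:R ^+ j.+1 * c :> R.
  rewrite -[in leLHS](subnKC le_jd) -addSn exprD ler_wpM2l ?exprn_ge0 //.
  by rewrite lerXn2r ?nnegrE ?ler_nat.
rewrite -(ler_pM2r (lt_le_trans ltr01 c_ge1)) -mulrA -powd [leRHS]mulrDl.
apply: le_trans (smooth_unit_deg n) _; apply: lerD; first by rewrite ler_peMr.
by rewrite -mulrA ler_wpM2l ?fdiffX_ge0.
Qed.

Lemma smooth_monomial x y j : (j <= d)%N ->
  Q k * (y%:R * x.+1%:R ^+ j) <= L * y%:R ^+ j.+1 + P k * x%:R ^+ j.+1.
Proof.
move=> le_jd; case: y => [|y].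
  by rewrite mul0r mulr0 expr0n mulr0 add0r mulr_ge0 ?fdiffX_ge0 ?exprn_ge0.
(* Compare with the unit case at q = x %/ y, since q y <= x < (q+1) y. *)
set q := (x %/ y.+1)%N.
have le_x1 : (x.+1 <= q.+1 * y.+1)%N by rewrite ltn_ceil.
have le_qy : (q * y.+1 <= x)%N by rewrite leq_divM.
apply: le_trans (_ : Q k * (y.+1%:R * (q.+1 * y.+1)%:R ^+ j) <= _).
  by rewrite ler_wpM2l ?fdiffX_ge0 // ler_wpM2l // lerXn2r ?nnegrE ?ler_nat.
apply: le_trans (_ : y.+1%:R ^+ j.+1 * (L + P k * q%:R ^+ j.+1) <= _).
  have -> : Q k * (y.+1%:R * (q.+1 * y.+1)%:R ^+ j)
          = y.+1%:R ^+ j.+1 * (Q k * q.+1%:R ^+ j) by rewrite natrM exprMn exprS; ring.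
  by rewrite ler_wpM2l ?exprn_ge0 // smooth_unit.
rewrite mulrDr mulrC lerD2l mulrCA -exprMn -natrM mulnC.
by rewrite ler_wpM2l ?fdiffX_ge0 // lerXn2r ?nnegrE ?ler_nat.
Qed.

Definition smooth_lambda : R := L / Q k.
Definition smooth_mu : R := P k / Q k.

Lemma smooth_lambda_ge1 : 1 <= smooth_lambda.
Proof. by rewrite ler_pdivlMr ?fdiffX_gt0 // mul1r smooth_num_ge. Qed.

Lemma smooth_mu_ge0 : 0 <= smooth_mu.
Proof. by rewrite divr_ge0 ?fdiffX_ge0 ?fdiffX_ge0. Qed.

Lemma smooth_poly (p : {poly R}) x y : (forall i, 0 <= p`_i) -> (size p <= d.+1)%N ->
  y%:R * p.[x.+1%:R]
    <= smooth_lambda * (y%:R * p.[y%:R]) + smooth_mu * (x%:R * p.[x%:R]).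
Proof.
move=> p_ge0 size_p; rewrite -(ler_pM2l (fdiffX_gt0 d (ler0n R k))).
have Q_neq0 : Q k != 0 by rewrite gt_eqF ?fdiffX_gt0.
have -> : forall a b, Q k * (smooth_lambda * a + smooth_mu * b) = L * a + P k * b.
  by move=> a b; rewrite /smooth_lambda /smooth_mu; field.
rewrite !(horner_coef_wide _ size_p) !mulr_sumr -big_split /=.
apply: ler_sum => -[i /= lt_id] _.
have -> : Q k * (y%:R * (p`_i * x.+1%:R ^+ i)) = p`_i * (Q k * (y%:R * x.+1%:R ^+ i)).
  by ring.
have -> : L * (y%:R * (p`_i * y%:R ^+ i)) + P k * (x%:R * (p`_i * x%:R ^+ i))
        = p`_i * (L * y%:R ^+ i.+1 + P k * x%:R ^+ i.+1) by rewrite !exprS; ring.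
by rewrite ler_wpM2l ?smooth_monomial.
Qed.

End Smoothness.

Section PsiRoot.
Variables (R : realFieldType) (d : nat) (a : R).
Hypothesis a_ge0 : 0 <= a.

Definition psi_gap (x : R) : R := (1 + a) * x ^+ d.+1 - a - (x + 1) ^+ d.

Lemma psi_gap_scaledE x y :
  psi_gap x * y ^+ d.+1 - psi_gap y * x ^+ d.+1
    = a * (x ^+ d.+1 - y ^+ d.+1) + (x * (x * (y + 1)) ^+ d - y * ((x + 1) * y) ^+ d).
Proof. by rewrite /psi_gap !exprMn !exprS; ring. Qed.

Lemma psi_gap_scaled_le x y : 0 <= x -> x <= y ->
  psi_gap x * y ^+ d.+1 <= psi_gap y * x ^+ d.+1.
Proof.
move=> x_ge0 le_xy; rewrite -subr_le0 psi_gap_scaledE.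
have y_ge0 : 0 <= y := le_trans x_ge0 le_xy.
rewrite -[leRHS](addr0 0); apply: lerD.
  by rewrite mulr_ge0_le0 // subr_le0 lerXn2r ?nnegrE.
rewrite subr_le0 ler_pM ?exprn_ge0 ?mulr_ge0 ?addr_ge0 //.
by rewrite lerXn2r ?nnegrE ?mulr_ge0 ?addr_ge0 //; lra.
Qed.

Lemma psi_gap_scaled_lt x y : 0 <= x -> x < y ->
  psi_gap x * y ^+ d.+1 < psi_gap y * x ^+ d.+1.
Proof.
move=> x_ge0 lt_xy; rewrite -subr_lt0 psi_gap_scaledE.
have y_gt0 : 0 < y := le_lt_trans x_ge0 lt_xy.
have y_ge0 := ltW y_gt0.
rewrite -[ltRHS](addr0 0); apply: ler_ltD (mulr_ge0_le0 a_ge0 _) _.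
  by rewrite subr_le0 lerXn2r ?nnegrE // ltW.
rewrite subr_lt0; apply: le_lt_trans (_ : x * ((x + 1) * y) ^+ d < _).
  by rewrite ler_wpM2l // lerXn2r ?nnegrE ?mulr_ge0 ?addr_ge0 //; lra.
by rewrite ltr_pM2r // exprn_gt0 // mulr_gt0 //; lra.
Qed.

Variable psi : R.
Hypothesis psi_gt0 : 0 < psi.
Hypothesis psi_root : psi ^+ d.+1 + a * psi ^+ d.+1 = (psi + 1) ^+ d + a.

Lemma psi_gap_root : psi_gap psi = 0.
Proof. by rewrite /psi_gap mulrDl mul1r psi_root; ring. Qed.

Lemma psi_gap_le0 x : 0 <= x -> x <= psi -> psi_gap x <= 0.
Proof.
move=> x_ge0 le_x_psi; rewrite -(pmulr_lle0 _ (exprn_gt0 d.+1 psi_gt0)).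
by have := psi_gap_scaled_le x_ge0 le_x_psi; rewrite psi_gap_root mul0r.
Qed.

Lemma psi_gap_gt0 x : psi < x -> 0 < psi_gap x.
Proof.
move=> lt_psi_x; rewrite -(pmulr_lgt0 _ (exprn_gt0 d.+1 psi_gt0)).
by have := psi_gap_scaled_lt (ltW psi_gt0) lt_psi_x; rewrite psi_gap_root mul0r.
Qed.

Lemma smooth_mu_lt (k : nat) : k%:R <= psi < k.+1%:R -> smooth_mu R d k < 1 + a.
Proof.
case/andP=> le_k_psi lt_psi_k1.
have gap : psi_gap k%:R < psi_gap k.+1%:R.
  exact: le_lt_trans (psi_gap_le0 (ler0n R k) le_k_psi) (psi_gap_gt0 lt_psi_k1).
rewrite ltr_pdivrMr ?fdiffX_gt0 //.
by move: gap; rewrite /psi_gap /fdiffX !natr1; lra.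
Qed.

End PsiRoot.

Lemma ler_horner (R : numDomainType) (p : {poly R}) x y :
  (forall i, 0 <= p`_i) -> 0 <= x -> x <= y -> p.[x] <= p.[y].
Proof.
move=> p_ge0 x_ge0 le_xy; rewrite !horner_coef; apply: ler_sum => i _.
by rewrite ler_wpM2l // lerXn2r ?nnegrE ?(le_trans x_ge0 le_xy).
Qed.

Section CongestionGame.
Variables (R : realFieldType) (A Res : finType) (T : A -> finType).
Variables (used : forall i : A, T i -> {set Res}) (Jr : Res -> {poly R}).
Variable Jper : forall i : A, T i -> R.
Implicit Types g o : profile T.

Local Notation load := (load used).
Local Notation Jcg := (Jcg used Jr).
Local Notation Jcost := (Jcost used Jr Jper).
Local Notation Csoc := (Csoc used Jr Jper).
Local Notation isNE := (isNE used Jr Jper).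

Lemma exchange_used_sum g (f : Res -> R) :
  \sum_(i : A) \sum_(r in used (g i)) f r = \sum_(r : Res) (load r g)%:R * f r.
Proof.
under eq_bigr do rewrite big_mkcond /=.
rewrite exchange_big /=; apply: eq_bigr => r _.
rewrite /load natr_sum mulr_suml; apply: eq_bigr => i _.
by case: (r \in used (g i)); rewrite ?mul1r ?mul0r.
Qed.

Lemma load_dfwith_le g (i : A) (x : T i) r : (load r (dfwith g x) <= (load r g).+1)%N.
Proof.
rewrite /load (bigD1 i) // [X in (_ <= X.+1)%N](bigD1 i) //= dfwith_in -addSn leq_add //.
  by case: (r \in used x).
rewrite leq_eqVlt; apply/orP; left; apply/eqP/eq_bigr => j ne_ji.
by rewrite dfwith_out // eq_sym.
Qed.

Lemma Csoc_split g : Csoc g = \sum_(i : A) Jcg i g + \sum_(i : A) Jper (g i).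
Proof. by rewrite /Csoc /Jcost big_split. Qed.

Section NonnegativeCoefficients.
Hypothesis Jr_coef_ge0 : forall r n, 0 <= (Jr r)`_n.

Lemma NE_deviation_le g o i : isNE g ->
  Jcost i g <= \sum_(r in used (o i)) (Jr r).[(load r g).+1%:R] + Jper (o i).
Proof.
move=> /(_ i (o i)) /le_trans; apply.
rewrite /Jcost /Jcg dfwith_in lerD2r; apply: ler_sum => r _.
by rewrite ler_horner // ler_nat load_dfwith_le.
Qed.

Lemma NE_smooth (lam mu : R) g o :
  (forall r (x y : nat),
     y%:R * (Jr r).[x.+1%:R] <= lam * (y%:R * (Jr r).[y%:R]) + mu * (x%:R * (Jr r).[x%:R])) ->
  isNE g ->
  Csoc g <= lam * \sum_(i : A) Jcg i o + mu * \sum_(i : A) Jcg i g + \sum_(i : A) Jper (o i).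
Proof.
move=> smooth g_NE.
apply: le_trans (_ : \sum_(i : A) (\sum_(r in used (o i)) (Jr r).[(load r g).+1%:R]
                                    + Jper (o i)) <= _).
  by apply: ler_sum => i _; apply: NE_deviation_le.
rewrite big_split lerD2r /= /Jcg !exchange_used_sum !mulr_sumr -big_split.
by apply: ler_sum => r _; apply: smooth.
Qed.

End NonnegativeCoefficients.
End CongestionGame.

Lemma poa_of_smooth (R : realFieldType) (lam mu a Cg Pg Co Po : R) :
  1 <= lam -> 0 <= mu -> 0 <= a -> mu < 1 + a ->
  a * Cg <= Pg -> a * Co <= Po -> Cg + Pg <= lam * Co + mu * Cg + Po ->
  Cg + Pg <= (lam + a) / (1 + a - mu) * (Co + Po).
Proof.
move=> lam_ge1 mu_ge0 a_ge0 mu_lt le_Cg le_Co smooth.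
rewrite mulrAC ler_pdivlMr ?subr_gt0 //.
have h1 : 0 <= mu * (Pg - a * Cg) by rewrite mulr_ge0 ?subr_ge0.
have h2 : 0 <= (lam - 1) * (Po - a * Co) by rewrite mulr_ge0 ?subr_ge0.
have h3 : (1 + a) * (Cg + Pg) <= (1 + a) * (lam * Co + mu * Cg + Po).
  by rewrite ler_wpM2l ?addr_ge0.
lra.
Qed.

Lemma poa_boundE (R : realFieldType) d k (a : R) :
  poa_bound d k a = (smooth_lambda R d k + a) / (1 + a - smooth_mu R d k).
Proof.
have Q_neq0 : fdiffX d.+1 (k%:R : R) != 0 by rewrite gt_eqF ?fdiffX_gt0.
rewrite /smooth_lambda /smooth_mu /smooth_num.
set Q := fdiffX d.+1 (k%:R : R); set P := fdiffX d (k.+1%:R : R).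
set L := Q * _ - _.
have -> : L / Q + a = (L + a * Q) / Q by field.
have -> : 1 + a - P / Q = ((1 + a) * Q - P) / Q by field.
rewrite invf_div mulrA divfK // /poa_bound /L /Q /P /fdiffX !natr1.
congr (_ / _); last by ring.
by rewrite addn1 mul2n -addnn -addSn exprD; ring.
Qed.

Theorem theorem1 (R : realFieldType) (A Res : finType) (T : A -> finType)
  (used : forall i : A, T i -> {set Res}) (Jr : Res -> {poly R})
  (Jper : forall i : A, T i -> R) (d : nat)
  (HT : forall i : A, (0 < #|T i|)%N)
  (HJr_coef : forall (r : Res) (n : nat), 0 <= (Jr r)`_n)
  (HJr_deg : forall r : Res, (size (Jr r) <= d.+1)%N)
  (HJper : forall (i : A) (x : T i), 0 <= Jper i x)
  (alpha : R) (Halpha0 : 0 <= alpha)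
  (Halpha_ok : alpha_ok used Jr Jper alpha)
  (Halpha_max : forall beta : R, 0 <= beta -> alpha_ok used Jr Jper beta -> beta <= alpha)
  (Psi : R) (HPsi_pos : 0 < Psi)
  (HPsi : Psi ^+ d.+1 + alpha * Psi ^+ d.+1 = (Psi + 1) ^+ d + alpha)
  (k : nat) (Hk : (k%:R <= Psi < k.+1%:R)) :
  forall g : profile T, isNE used Jr Jper g ->
  forall gopt : profile T, isOpt used Jr Jper gopt ->
  Csoc used Jr Jper g <= poa_bound d k alpha * Csoc used Jr Jper gopt.
Proof.
move=> g g_NE o o_opt.
rewrite poa_boundE !Csoc_split.
apply: poa_of_smooth; rewrite ?smooth_lambda_ge1 ?smooth_mu_ge0 //.
- exact: (smooth_mu_lt Halpha0 HPsi_pos HPsi Hk).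
- by rewrite mulr_sumr; apply: ler_sum => i _; apply: Halpha_ok; left.
- by rewrite mulr_sumr; apply: ler_sum => i _; apply: Halpha_ok; right.
- rewrite -Csoc_split; apply: NE_smooth => // r x y.
  exact: smooth_poly.
Qed.
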